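(* For any simple undirected graph $G$, the number of subgraphs isomorphic to the paw graph is $$n_G(\text{paw})=\sum_{\{st,uv\}\in Q}(a_{su}+a_{tv})(a_{sv}+a_{tu}).$$
   Context: $a_{ij}$ are adjacency matrix entries. $Q$ is the set of unordered pairs $\{st,uv\}$ of edges with $s,t,u,v$ pairwise distinct. The paw graph is a triangle with one pendant edge attached to one of its vertices (4 vertices, 4 edges). $n_G(F)$ counts (not necessarily induced) subgraphs isomorphic to $F$. *)

From mathcomp Require Import all_boot.
Set Implicit Arguments. Unset Strict Implicit. Unset Printing Implicit Defensive.

Section Defs.
Variable T : finType.
Variable e : rel T.

Definition adj (x y : T) : nat := e x y.

Definition edges : {set {set T}} :=
  [set A : {set T} | [exists x, exists y, (x != y) && e x y && (A == [set x; y])]].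

Definition is_copy (V : finType) (eF : rel V) (p : {set T} * {set {set T}}) : bool :=
  let: (Sv, E') := p in
  [&& E' \subset edges,
      [forall A in E', A \subset Sv] &
      [exists f : {ffun V -> T},
         [&& injectiveb f, f @: setT == Sv &
             [forall i, forall j, ([set f i; f j] \in E') == eF i j]]]].

(* n_G(F): number of (not necessarily induced) subgraphs of G isomorphic to F *)
Definition nsub (V : finType) (eF : rel V) : nat :=
  #|[set p : {set T} * {set {set T}} | is_copy eF p]|.

Definition rep (P : {set {set T}}) (q : T * T * T * T) : bool :=
  let: (s, t, u, v) := q in
  [&& uniq [:: s; t; u; v], e s t, e u v & P == [set [set s; t]; [set u; v]]].

Definition Qset : {set {set {set T}}} := [set P | [exists q, rep P q]].

(* the summand (a_su + a_tv)(a_sv + a_tu), computed from any representative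
   (independent of the choice of representative) *)
Definition Qterm (P : {set {set T}}) : nat :=
  if [pick q | rep P q] is Some (s, t, u, v)
  then (adj s u + adj t v) * (adj s v + adj t u) else 0.
End Defs.

(* the paw: triangle 0-1-2 plus pendant edge 2-3 *)
Definition paw_rel : rel 'I_4 := fun i j =>
  let p := (nat_of_ord i, nat_of_ord j) in
  (p \in [:: (0,1); (1,0); (0,2); (2,0); (1,2); (2,1); (2,3); (3,2)]).

From mathcomp Require Import all_boot zify.
Set Implicit Arguments. Unset Strict Implicit. Unset Printing Implicit Defensive.

(* Count labelled copies.  An injective edge-preserving map from the vertices of a
   pattern F into G determines a copy of F, and every copy arises from exactly
   |Aut F| such maps.  For F = paw, |Aut F| = 2.  For F = 2K2 (the edges 01 and 23)
   the copies are the elements of Q and |Aut F| = 8, so summing the weight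
   (a_su + a_tv)(a_sv + a_tu) over labelled copies (s,t,u,v) of 2K2 gives 8 times the
   right-hand side.  Each of the four monomials of the weight is the indicator that a
   fixed relabelling of (s,t,u,v) is a labelled paw, and relabelling is a bijection on
   maps, so the same sum is 4 * 2 * n_G(paw). *)

Lemma eq_set2 (T : finType) (x y z w : T) :
  ([set x; y] == [set z; w]) = (x == z) && (y == w) || (x == w) && (y == z).
Proof.
apply/eqP/idP => [E | /orP[] /andP[/eqP-> /eqP->] //]; last exact: setUC.
have := set21 z w; have := set22 z w; rewrite -E !inE.
have := set21 x y; have := set22 x y; rewrite E !inE.
by do 2![case/orP=> /eqP->]; rewrite ?eqxx ?orbT // (eq_sym w z); case: (z == w).
Qed.

Definition aut (V : finType) (eF : rel V) : {set {ffun V -> V}} :=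
  [set s : {ffun V -> V} | injectiveb s && [forall i, forall j, eF (s i) (s j) == eF i j]].

Section Relabelling.
Variables (T V : finType).

Definition compose_ffun (f : {ffun V -> T}) (s : {ffun V -> V}) : {ffun V -> T} :=
  [ffun i => f (s i)].

Lemma injectiveb_compose f (s : {ffun V -> V}) :
  injective s -> injectiveb (compose_ffun f s) = injectiveb f.
Proof.
move=> s_inj; have [s' _ s's] := injF_bij s_inj.
apply/injectiveP/injectiveP => f_inj i j; last by rewrite !ffunE => /f_inj /s_inj.
by move=> fij; rewrite -(s's i) -(s's j) (f_inj (s' i) (s' j)) // !ffunE !s's.
Qed.

Lemma big_compose_ffun (R : Type) (idx : R) (op : Monoid.com_law idx) (s : {ffun V -> V})
    (F : {ffun V -> T} -> R) :
  injective s -> \big[op/idx]_f F (compose_ffun f s) = \big[op/idx]_f F f.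
Proof.
move=> s_inj; have [s' _ s's] := injF_bij s_inj.
apply/esym/reindex_inj => f g /ffunP fg; apply/ffunP=> i.
by have := fg (s' i); rewrite !ffunE s's.
Qed.
End Relabelling.

Section Copies.
Variables (T V : finType) (e : rel T) (eF : rel V).

Definition copy_witness (p : {set T} * {set {set T}}) (f : {ffun V -> T}) : bool :=
  [&& injectiveb f, f @: setT == p.1
    & [forall i, forall j, ([set f i; f j] \in p.2) == eF i j]].

Lemma is_copyE p : is_copy e eF p =
  [&& p.2 \subset edges e, [forall A in p.2, A \subset p.1] & [exists f, copy_witness p f]].
Proof. by case: p. Qed.

Lemma is_copy_witness p : is_copy e eF p -> exists f, copy_witness p f.
Proof. by rewrite is_copyE => /and3P[_ _ /existsP]. Qed.

Lemma copy_witness_compose p f0 s : copy_witness p f0 ->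
  copy_witness p (compose_ffun f0 s) = (s \in aut eF).
Proof.
case/and3P=> /injectiveP f0_inj /eqP f0_im /forallP f0_edges.
have f0_edgesE i j : ([set f0 i; f0 j] \in p.2) = eF i j.
  by apply/eqP; exact: (forallP (f0_edges i) j).
rewrite inE; apply/and3P/andP => [[/injectiveP f0s_inj _ /forallP f0s_edges] | ].
  split; first by apply/injectiveP=> i j sij; apply: f0s_inj; rewrite !ffunE sij.
  apply/forallP=> i; apply/forallP=> j.
  by rewrite -f0_edgesE; have := forallP (f0s_edges i) j; rewrite !ffunE.
case=> /injectiveP s_inj /forallP s_aut; have [s' _ s's] := injF_bij s_inj.
split.
- by apply/injectiveP=> i j; rewrite !ffunE => /f0_inj /s_inj.
- rewrite -f0_im; apply/eqP/setP=> x; apply/imsetP/imsetP => -[i _ ->].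
    by exists (s i); rewrite ?ffunE.
  by exists (s' i); rewrite ?ffunE ?s's.
- apply/forallP=> i; apply/forallP=> j.
  by rewrite !ffunE f0_edgesE; exact: (forallP (s_aut i) j).
Qed.

Lemma copy_witness_factor p f0 f : copy_witness p f0 -> copy_witness p f ->
  exists s, f = compose_ffun f0 s.
Proof.
case/and3P=> _ /eqP f0_im _ /and3P[_ /eqP f_im _].
have /fin_all_exists[s f0s] : forall i, exists j, f0 j = f i.
  move=> i; have : f i \in f0 @: setT by rewrite f0_im -f_im imset_f.
  by case/imsetP=> j _ ->; exists j.
by exists [ffun i => s i]; apply/ffunP=> i; rewrite !ffunE.
Qed.

Lemma card_copy_witness p f0 : copy_witness p f0 ->
  #|[set f | copy_witness p f]| = #|aut eF|.
Proof.
move=> f0_wit; have /and3P[/injectiveP f0_inj _ _] := f0_wit.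
have compose_inj : injective (compose_ffun f0).
  move=> s s' /ffunP eq_ss'; apply/ffunP=> i; apply: f0_inj.
  by have := eq_ss' i; rewrite !ffunE.
rewrite -(card_imset _ compose_inj); apply: eq_card => f; rewrite inE.
apply/idP/imsetP => [f_wit | [s s_aut ->]]; last by rewrite copy_witness_compose.
have [s f_f0s] := copy_witness_factor f0_wit f_wit.
by exists s; rewrite // -(copy_witness_compose s f0_wit) -f_f0s.
Qed.
End Copies.

Section Embeddings.
Variables (T V : finType) (e : rel T) (eF : rel V).
Hypotheses (e_sym : symmetric e) (e_irr : irreflexive e) (eF_sym : symmetric eF).

Definition embedding (f : {ffun V -> T}) : bool :=
  injectiveb f && [forall i, forall j, eF i j ==> e (f i) (f j)].

Definition copy_of (f : {ffun V -> T}) : {set T} * {set {set T}} :=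
  (f @: setT, [set [set f i; f j] | i : V, j : V in eF i]).

Lemma mem_edges x y : ([set x; y] \in edges e) = e x y.
Proof.
rewrite inE; apply/existsP/idP => [[a /existsP[b]] | exy].
  case/andP=> /andP[_ eab]; rewrite eq_set2.
  by case/orP=> /andP[/eqP-> /eqP->] //; rewrite e_sym.
exists x; apply/existsP; exists y; rewrite exy eqxx andbT andbT.
by apply: contraTneq exy => ->; rewrite e_irr.
Qed.

Lemma edges_set2 A : A \in edges e -> exists x y, A = [set x; y].
Proof. by rewrite inE => /existsP[x /existsP[y /andP[_ /eqP->]]]; exists x, y. Qed.

Lemma mem_copy_of_edges (f : {ffun V -> T}) i j : injective f ->
  ([set f i; f j] \in (copy_of f).2) = eF i j.
Proof.
move=> f_inj; apply/imset2P/idP => [[a b] | eij]; last by exists i j; rewrite ?inE.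
rewrite !inE => _ eab /eqP; rewrite eq_set2 !(inj_eq f_inj).
by case/orP=> /andP[/eqP-> /eqP->] //; rewrite eF_sym.
Qed.

Lemma copy_witness_copy_of (f : {ffun V -> T}) : injective f -> copy_witness eF (copy_of f) f.
Proof.
move=> f_inj; apply/and3P; split; [exact/injectiveP | by [] |].
by apply/forallP=> i; apply/forallP=> j; rewrite mem_copy_of_edges.
Qed.

Lemma is_copy_of (f : {ffun V -> T}) : embedding f -> is_copy e eF (copy_of f).
Proof.
case/andP=> /injectiveP f_inj /forallP f_hom; rewrite is_copyE; apply/and3P; split.
- apply/subsetP=> _ /imset2P[i j _ eij ->]; rewrite mem_edges.
  exact: (implyP (forallP (f_hom i) j)).
- apply/forallP=> A; apply/implyP=> /imset2P[i j _ _ ->].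
  by apply/subsetP=> x /set2P[]->; apply: imset_f.
- by apply/existsP; exists f; apply: copy_witness_copy_of.
Qed.

Lemma copy_witnessE p (f : {ffun V -> T}) : is_copy e eF p ->
  copy_witness eF p f = embedding f && (copy_of f == p).
Proof.
case: p => S E; rewrite is_copyE /= => /and3P[/subsetP E_edges /forallP E_in_S _].
apply/idP/andP => [f_wit | [emb_f /eqP <-]]; last first.
  by apply: copy_witness_copy_of; case/andP: emb_f => /injectiveP.
case/and3P: (f_wit) => /injectiveP f_inj /eqP f_im /forallP f_edges.
have f_edgesE i j : ([set f i; f j] \in E) = eF i j.
  by apply/eqP; exact: (forallP (f_edges i) j).
split.
  apply/andP; split; first exact/injectiveP.
  apply/forallP=> i; apply/forallP=> j; apply/implyP; rewrite -f_edgesE.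
  by move/E_edges; rewrite mem_edges.
rewrite /copy_of f_im; apply/eqP; congr (_, _); apply/setP=> A.
apply/imset2P/idP => [[i j _ eij ->] | A_E]; first by rewrite f_edgesE.
have [x [y A_xy]] := edges_set2 (E_edges _ A_E).
have /subsetP A_S := implyP (E_in_S A) A_E.
have /imsetP[i _ x_fi] : x \in f @: setT by rewrite f_im A_S // A_xy set21.
have /imsetP[j _ y_fj] : y \in f @: setT by rewrite f_im A_S // A_xy set22.
have eij : eF i j by rewrite -f_edgesE -x_fi -y_fj -A_xy.
by exists i j; rewrite // A_xy x_fi y_fj.
Qed.

Lemma is_copyP p : reflect (exists2 f, embedding f & p = copy_of f) (is_copy e eF p).
Proof.
apply: (iffP idP) => [p_copy | [f emb_f ->]]; last exact: is_copy_of.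
have [f f_wit] := is_copy_witness p_copy.
by move: f_wit; rewrite copy_witnessE // => /andP[emb_f /eqP <-]; exists f.
Qed.

Lemma sum_embeddings (F : {set T} * {set {set T}} -> nat) :
  \sum_(f | embedding f) F (copy_of f) = #|aut eF| * \sum_(p | is_copy e eF p) F p.
Proof.
rewrite (partition_big copy_of (is_copy e eF)) ?big_distrr /=; last exact: is_copy_of.
apply: eq_bigr => p p_copy.
rewrite (eq_bigr (fun _ => F p)) => [|f /andP[_ /eqP->] //].
rewrite sum_nat_cond_const; congr (_ * _).
have [f0 f0_wit] := is_copy_witness p_copy.
rewrite -(card_copy_witness f0_wit); apply: eq_card => f.
by rewrite !inE copy_witnessE.
Qed.
End Embeddings.

Definition o0 : 'I_4 := @Ordinal 4 0 isT.
Definition o1 : 'I_4 := @Ordinal 4 1 isT.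
Definition o2 : 'I_4 := @Ordinal 4 2 isT.
Definition o3 : 'I_4 := @Ordinal 4 3 isT.

Lemma ord4P (i : 'I_4) : [\/ i = o0, i = o1, i = o2 | i = o3].
Proof.
by case: i => -[|[|[|[|//]]]] ?; [constructor 1|constructor 2|constructor 3|constructor 4];
  apply: val_inj.
Qed.

Lemma forall_ord4 (P : pred 'I_4) : [forall i, P i] = [&& P o0, P o1, P o2 & P o3].
Proof.
apply/forallP/and4P => [P_all | [P0 P1 P2 P3] i]; first by split; apply: P_all.
by case: (ord4P i) => ->.
Qed.

Section FourPoints.
Variable T : finType.

Definition fun4 (x0 x1 x2 x3 : T) : {ffun 'I_4 -> T} :=
  [ffun i : 'I_4 => nth x0 [:: x0; x1; x2; x3] i].

Lemma ffun4E (f : {ffun 'I_4 -> T}) : f = fun4 (f o0) (f o1) (f o2) (f o3).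
Proof. by apply/ffunP=> i; rewrite ffunE; case: (ord4P i) => ->. Qed.

Lemma eq_fun4 x0 x1 x2 x3 y0 y1 y2 y3 :
  (fun4 x0 x1 x2 x3 == fun4 y0 y1 y2 y3) = [&& x0 == y0, x1 == y1, x2 == y2 & x3 == y3].
Proof.
apply/eqP/and4P => [/ffunP eq_xy | [/eqP-> /eqP-> /eqP-> /eqP->] //].
by split; apply/eqP;
  [move: (eq_xy o0) | move: (eq_xy o1) | move: (eq_xy o2) | move: (eq_xy o3)]; rewrite !ffunE.
Qed.

Lemma injectiveb_ord4 (f : {ffun 'I_4 -> T}) :
  injectiveb f = uniq [:: f o0; f o1; f o2; f o3].
Proof.
apply/injectiveP/idP => [f_inj | ].
  by rewrite /= !inE !(inj_eq f_inj).
rewrite /= !inE !negb_or => f_uniq i j.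
case: (ord4P i) => ->; case: (ord4P j) => -> // eq_f;
  by move: f_uniq; rewrite eq_f !eqxx ?andbF.
Qed.

Lemma injective_fun4 (x0 x1 x2 x3 : T) :
  uniq [:: x0; x1; x2; x3] -> injective (fun4 x0 x1 x2 x3).
Proof. by move=> x_uniq; apply/injectiveP; rewrite injectiveb_ord4 !ffunE. Qed.
End FourPoints.

Definition match_rel : rel 'I_4 := fun i j =>
  (nat_of_ord i, nat_of_ord j) \in [:: (0,1); (1,0); (2,3); (3,2)].

Lemma aut_paw : aut paw_rel =i [:: fun4 o0 o1 o2 o3; fun4 o1 o0 o2 o3].
Proof.
move=> s; rewrite (ffun4E s) !inE injectiveb_ord4 !forall_ord4 !ffunE !eq_fun4 /=.
move: (s o0) (s o1) (s o2) (s o3) => a b c d.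
by case: (ord4P a) => ->; case: (ord4P b) => ->; case: (ord4P c) => ->; case: (ord4P d) => ->.
Qed.

Lemma card_aut_paw : #|aut paw_rel| = 2.
Proof. by rewrite (eq_card aut_paw); apply/card_uniqP; rewrite /= !inE !eq_fun4. Qed.

Lemma aut_match : aut match_rel =i
  [:: fun4 o0 o1 o2 o3; fun4 o1 o0 o2 o3; fun4 o0 o1 o3 o2; fun4 o1 o0 o3 o2;
       fun4 o2 o3 o0 o1; fun4 o3 o2 o0 o1; fun4 o2 o3 o1 o0; fun4 o3 o2 o1 o0].
Proof.
move=> s; rewrite (ffun4E s) !inE injectiveb_ord4 !forall_ord4 !ffunE !eq_fun4 /=.
move: (s o0) (s o1) (s o2) (s o3) => a b c d.
by case: (ord4P a) => ->; case: (ord4P b) => ->; case: (ord4P c) => ->; case: (ord4P d) => ->.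
Qed.

Lemma card_aut_match : #|aut match_rel| = 8.
Proof. by rewrite (eq_card aut_match); apply/card_uniqP; rewrite /= !inE !eq_fun4. Qed.

Lemma paw_rel_sym : symmetric paw_rel.
Proof. by move=> i j; case: (ord4P i) => ->; case: (ord4P j) => ->. Qed.

Lemma match_rel_sym : symmetric match_rel.
Proof. by move=> i j; case: (ord4P i) => ->; case: (ord4P j) => ->. Qed.

Section PawCount.
Variables (T : finType) (e : rel T).
Hypotheses (e_sym : symmetric e) (e_irr : irreflexive e).

Lemma embedding_pawE (f : {ffun 'I_4 -> T}) : embedding e paw_rel f =
  [&& injectiveb f, e (f o0) (f o1), e (f o0) (f o2), e (f o1) (f o2) & e (f o2) (f o3)].
Proof.
rewrite /embedding !forall_ord4 /= ![e (f o1) (f o0)]e_sym ![e (f o2) (f o0)]e_sym.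
rewrite ![e (f o2) (f o1)]e_sym ![e (f o3) (f o2)]e_sym.
by case: (e (f o0) (f o1)); case: (e (f o0) (f o2)); case: (e (f o1) (f o2));
  case: (e (f o2) (f o3)); rewrite ?andbF.
Qed.

Lemma embedding_matchE (f : {ffun 'I_4 -> T}) :
  embedding e match_rel f = [&& injectiveb f, e (f o0) (f o1) & e (f o2) (f o3)].
Proof.
rewrite /embedding !forall_ord4 /= ![e (f o1) (f o0)]e_sym ![e (f o3) (f o2)]e_sym.
by case: (e (f o0) (f o1)); case: (e (f o2) (f o3)); rewrite ?andbF.
Qed.

Lemma copy_of_match (f : {ffun 'I_4 -> T}) :
  let P := [set [set f o0; f o1]; [set f o2; f o3]] in copy_of match_rel f = (cover P, P).
Proof.
congr (_, _); apply/setP.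
  move=> x; apply/imsetP/bigcupP => [[i _ ->] | [B /set2P[]-> /set2P[]->]];
    [|by exists o0|by exists o1|by exists o2|by exists o3].
  by case: (ord4P i) => ->; [exists [set f o0; f o1] | exists [set f o0; f o1]
    | exists [set f o2; f o3] | exists [set f o2; f o3]]; rewrite !inE eqxx ?orbT.
move=> A; apply/imset2P/set2P => [[i j _ ij_edge ->] | [->|->]];
  [|by exists o0 o1|by exists o2 o3].
by move: ij_edge; case: (ord4P i) => ->; case: (ord4P j) => -> //= _;
  rewrite setUC; [left|left|right|right].
Qed.

Lemma is_copy_matchE P : is_copy e match_rel (cover P, P) = (P \in Qset e).
Proof.
apply/(is_copyP e_sym e_irr match_rel_sym)/idP => [[f emb_f copy_f] | ]; rewrite inE.
  move: emb_f; rewrite embedding_matchE injectiveb_ord4 => /and3P[f_uniq e01 e23].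
  apply/existsP; exists (f o0, f o1, f o2, f o3); rewrite /rep f_uniq e01 e23 /=.
  by move/(congr1 snd): copy_f; rewrite copy_of_match /= => ->.
case/existsP=> -[[[s t] u] v] /and4P[stuv_uniq est euv /eqP ->].
exists (fun4 s t u v); last by rewrite copy_of_match !ffunE.
by rewrite embedding_matchE injectiveb_ord4 !ffunE; apply/and3P.
Qed.

Lemma copy_match_cover p : is_copy e match_rel p -> p = (cover p.2, p.2).
Proof. by case/(is_copyP e_sym e_irr match_rel_sym) => f _ ->; rewrite copy_of_match. Qed.

Definition qweight (s t u v : T) : nat :=
  (adj e s u + adj e t v) * (adj e s v + adj e t u).

Lemma Qterm_rep P s t u v : rep e P (s, t, u, v) -> Qterm e P = qweight s t u v.
Proof.
move=> P_stuv; rewrite /Qterm; case: pickP => [[[[s' t'] u'] v'] P_stuv' | no_rep]; last first.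
  by rewrite no_rep in P_stuv.
move: P_stuv P_stuv' => /and4P[_ _ _ /eqP->] /and4P[_ _ _].
rewrite !eq_set2 /qweight /adj.
by case/orP=> /andP[] /orP[] /andP[/eqP-> /eqP->] /orP[] /andP[/eqP-> /eqP->];
  rewrite ?[e t' s']e_sym ?[e u' s']e_sym ?[e v' s']e_sym ?[e u' t']e_sym
          ?[e v' t']e_sym ?[e v' u']e_sym; lia.
Qed.

Lemma sum_Qset_copies (F : {set {set T}} -> nat) :
  \sum_(P in Qset e) F P = \sum_(p | is_copy e match_rel p) F p.2.
Proof.
rewrite [RHS](reindex (fun P => (cover P, P))); last first.
  by exists snd => // p; rewrite inE => /copy_match_cover.
by apply: eq_bigl => P; rewrite is_copy_matchE.
Qed.

Lemma sum_embeddings_match :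
  \sum_f embedding e match_rel f * qweight (f o0) (f o1) (f o2) (f o3) =
  8 * \sum_(P in Qset e) Qterm e P.
Proof.
rewrite sum_Qset_copies -card_aut_match -(sum_embeddings e_sym e_irr match_rel_sym).
rewrite [RHS]big_mkcond; apply: eq_bigr => f _; rewrite mulnbl.
case: ifP => //; rewrite embedding_matchE injectiveb_ord4 => /and3P[f_uniq e01 e23].
by apply/esym/Qterm_rep; rewrite copy_of_match /rep f_uniq e01 e23 /=.
Qed.

(* Of the four monomials of the weight, each closes a triangle over one edge of the
   matching, whose other edge becomes the pendant edge of a paw. *)
Lemma embedding_match_qweight (f : {ffun 'I_4 -> T}) :
  embedding e match_rel f * qweight (f o0) (f o1) (f o2) (f o3) =
    embedding e paw_rel f + embedding e paw_rel (compose_ffun f (fun4 o2 o3 o0 o1))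
  + embedding e paw_rel (compose_ffun f (fun4 o0 o1 o3 o2))
  + embedding e paw_rel (compose_ffun f (fun4 o2 o3 o1 o0)).
Proof.
rewrite embedding_matchE !embedding_pawE !injectiveb_compose; try exact: injective_fun4.
rewrite /compose_ffun !ffunE /=.
rewrite /qweight /adj ![e (f o1) (f o0)]e_sym ![e (f o2) (f o0)]e_sym ![e (f o3) (f o0)]e_sym.
rewrite ![e (f o2) (f o1)]e_sym ![e (f o3) (f o1)]e_sym ![e (f o3) (f o2)]e_sym.
by case: (injectiveb f); case: (e (f o0) (f o1)); case: (e (f o0) (f o2));
  case: (e (f o0) (f o3)); case: (e (f o1) (f o2)); case: (e (f o1) (f o3));
  case: (e (f o2) (f o3)).
Qed.
End PawCount.

Theorem proposition3 (T : finType) (e : rel T)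
  (e_sym : symmetric e) (e_irr : irreflexive e) :
  nsub e paw_rel = \sum_(P in Qset e) Qterm e P.
Proof.
have paw_embeddings : \sum_f (embedding e paw_rel f : nat) = 2 * nsub e paw_rel.
  rewrite /nsub -sum1dep_card -[X in _ = X * _]card_aut_paw.
  rewrite -(sum_embeddings e_sym e_irr paw_rel_sym).
  by rewrite [RHS]big_mkcond.
have relabelled_paws :
    \sum_f embedding e match_rel f * qweight e (f o0) (f o1) (f o2) (f o3) =
    4 * \sum_f (embedding e paw_rel f : nat).
  rewrite (eq_bigr _ (fun f _ => embedding_match_qweight e_sym f)) !big_split /=.
  rewrite !(big_compose_ffun _ (fun f => embedding e paw_rel f : nat));
    try exact: injective_fun4.
  by rewrite !mulSn mul0n addn0 !addnA.
have := sum_embeddings_match e_sym e_irr; lia.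
Qed.
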